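(* Let $R$ be a commutative $*$-ring with unity and $a,b\in R$. If $a\leq b$ in the natural partial order, then $a\underset{*}{\leqslant} b$, i.e. $a^*a=a^*b$ and $aa^*=ba^*$.
   Context: The natural partial order: $a\leq b$ iff there is $x\in R$ with $a=xa=xb=ax^*=bx^*$. The $*$-order (Drazin): $a\underset{*}{\leqslant} b$ iff $a^*a=a^*b$ and $aa^*=ba^*$. *)

From HB Require Import structures.
From mathcomp Require Import all_boot all_order all_algebra.
Set Implicit Arguments. Unset Strict Implicit. Unset Printing Implicit Defensive.
Import GRing.Theory.
Local Open Scope ring_scope.

Definition is_involution (R : pzRingType) (star : R -> R) : Prop :=
  [/\ forall x y, star (x + y) = star x + star y,
      forall x y, star (x * y) = star y * star x
    & forall x, star (star x) = x].

Definition nat_le (R : pzRingType) (star : R -> R) (a b : R) : Prop :=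
  exists x : R, [/\ a = x * a, a = x * b, a = a * star x & a = b * star x].

Definition star_le (R : pzRingType) (star : R -> R) (a b : R) : Prop :=
  star a * a = star a * b /\ a * star a = b * star a.

From mathcomp Require Import all_boot all_order all_algebra.
Import GRing.Theory.
Set Implicit Arguments. Unset Strict Implicit. Unset Printing Implicit Defensive.
Local Open Scope ring_scope.

(* Applying star to a = a x^* and a = x a shows that x and x^* both fix a^*;
   by commutativity they can be moved next to b in a^* (x b) and (b x^* ) a^*. *)

Section AntiMultiplicativeInvolution.

Variables (R : pzRingType) (star : R -> R).
Hypothesis starM : forall x y, star (x * y) = star y * star x.
Hypothesis starK : involutive star.

Lemma star_mulr_star_id (a y : R) : a * star y = a -> y * star a = star a.
Proof. by move=> ay; rewrite -{2}ay starM starK. Qed.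

Lemma star_mull_id (a y : R) : y * a = a -> star a * star y = star a.
Proof. by move=> ya; rewrite -{2}ya starM. Qed.

End AntiMultiplicativeInvolution.

Theorem mainTheorem3 (R : comPzRingType) (star : R -> R)
  (Hstar : is_involution star) (a b : R) :
  nat_le star a b -> star_le star a b.
Proof.
case: Hstar => _ starM starK [x [xa xb ax bx]].
have a_x : star a * x = star a.
  by rewrite mulrC (star_mulr_star_id starM starK) // -ax.
have a_xs : star x * star a = star a.
  by rewrite mulrC (star_mull_id starM) // -xa.
split.
- by rewrite {2}xb mulrA a_x.
- by rewrite {1}bx -mulrA a_xs.
Qed.
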